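(* Let $G$ be the cdf of a continuous real random variable. For $\lambda\in\mathbb{R}$ define $$F_{R19}(x)=(1-\lambda)G(x)+3\lambda G^2(x)-2\lambda G^3(x),$$ and for $(\lambda_1,\lambda_2)\in\mathbb{R}^2$ define $F_G(x)=\lambda_1 G(x)+(\lambda_2-\lambda_1)G^2(x)+(1-\lambda_2)G^3(x)$. Let $\mathscr{S}_G=\{(\lambda_1,\lambda_2):0\le\lambda_1\le1,\ -1\le\lambda_2\le1\}$ and $\mathscr{S}_{MG}=\{(\lambda_1,\lambda_2):0\le\lambda_1\le3,\ 0\le\lambda_2\le3,\ 0\le\lambda_1+\lambda_2\le3\}$. Then: (i) For every $\lambda\in[-1,1]$ with $\lambda\neq0$, there is no $(\lambda_1,\lambda_2)\in\mathscr{S}_G$ such that $F_{R19}$ with parameter $\lambda$ coincides with $F_G$ with parameters $(\lambda_1,\lambda_2)$. (ii) For every $\lambda\in[-\tfrac12,1]$, $(1-\lambda,1+2\lambda)\in\mathscr{S}_{MG}$ and $F_{R19}$ with parameter $\lambda$ coincides with $F_G$ with parameters $(1-\lambda,1+2\lambda)$. (iii) For every $\lambda\in[-2,1]$, $F_{R19}$ is a cdf.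
   Context: A cdf is a nondecreasing, right-continuous function $F:\mathbb{R}\to[0,1]$ with limits $0$ at $-\infty$ and $1$ at $+\infty$. $G^k(x)=(G(x))^k$. *)

From HB Require Import structures.
From mathcomp Require Import all_boot all_order all_algebra.
From mathcomp Require Import all_classical all_reals all_analysis.
Set Implicit Arguments. Unset Strict Implicit. Unset Printing Implicit Defensive.
Import Order.TTheory GRing.Theory Num.Theory.
Import numFieldNormedType.Exports.
Local Open Scope classical_set_scope.
Local Open Scope ring_scope.

Definition is_cdf (R : realType) (F : R -> R) : Prop :=
  [/\ (forall x y : R, x <= y -> F x <= F y),
      (forall x : R, 0 <= F x <= 1),
      (forall a : R, F x @[x --> a^'+] --> F a),
      F x @[x --> -oo] --> (0 : R)
    & F x @[x --> +oo] --> (1 : R)].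

Definition is_continuous_cdf (R : realType) (G : R -> R) : Prop :=
  is_cdf G /\ continuous G.

Definition F_R19 (R : realType) (G : R -> R) (lam : R) : R -> R :=
  fun x => (1 - lam) * G x + 3 * lam * (G x) ^+ 2 - 2 * lam * (G x) ^+ 3.

Definition F_Gfam (R : realType) (G : R -> R) (l1 l2 : R) : R -> R :=
  fun x => l1 * G x + (l2 - l1) * (G x) ^+ 2 + (1 - l2) * (G x) ^+ 3.

Definition S_G (R : realType) (l1 l2 : R) : Prop :=
  0 <= l1 <= 1 /\ -1 <= l2 <= 1.

Definition S_MG (R : realType) (l1 l2 : R) : Prop :=
  [/\ 0 <= l1 <= 3, 0 <= l2 <= 3 & 0 <= l1 + l2 <= 3].

From HB Require Import structures.
From mathcomp Require Import all_boot all_order all_algebra.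
From mathcomp Require Import all_classical all_reals all_analysis.
From mathcomp Require Import ring lra.
Set Implicit Arguments. Unset Strict Implicit.
Import Order.TTheory GRing.Theory Num.Theory.
Import numFieldNormedType.Exports.
Local Open Scope classical_set_scope.
Local Open Scope ring_scope.

(* Both families are cubic polynomials in G: F_R19 G lam = h \o G with
   h := F_R19 id lam, and h is the member (1 - lam, 1 + 2 lam) of the second
   family.  As G takes every value in (0, 1), a coincidence of the two
   families is an identity of cubics on (0, 1), which determines the
   parameters; these lie in S_G only for lam = 0.  For -2 <= lam <= 1 the
   cubic h is nondecreasing on [0, 1] and fixes 0 and 1, so h \o G is a cdf
   for every cdf G. *)

Section ContinuousCdf.
Variables (R : realType) (G : R -> R).
Hypothesis cdfG : is_continuous_cdf G.

Lemma continuous_cdf_onto (v : R) : 0 < v < 1 -> exists x, G x = v.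
Proof.
have [[G_mono _ _ G_Ny G_y] G_cont] := cdfG; move=> /andP[v_gt0 v_lt1].
have [a /= Ga] := filter_ex (cvgr_lt _ G_Ny v v_gt0).
have [b /= Gb] := filter_ex (cvgr_gt _ G_y v v_lt1).
have le_ab : a <= b.
  by rewrite leNgt; apply/negP => /ltW/G_mono; lra.
have v_between : Num.min (G a) (G b) <= v <= Num.max (G a) (G b).
  by rewrite ge_min le_max; apply/andP; split; apply/orP; [left|right]; lra.
have [c _ Gc] := IVT le_ab (continuous_subspaceT G_cont) v_between.
by exists c.
Qed.

(* F_R19 G lam - F_Gfam G l1 l2 is t (t - 1) (c t - a) at t = G x, with
   a = 1 - lam - l1 and c = l2 - 1 - 2 lam; two values of G in (0, 1)
   force a = c = 0. *)
Lemma F_R19_eq_F_Gfam_params (lam l1 l2 : R) :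
  F_R19 G lam = F_Gfam G l1 l2 -> l1 = 1 - lam /\ l2 = 1 + 2 * lam.
Proof.
move=> eqF.
have [x1 Gx1] := @continuous_cdf_onto (1 / 3) ltac:(apply/andP; split; lra).
have [x2 Gx2] := @continuous_cdf_onto (2 / 3) ltac:(apply/andP; split; lra).
have := congr1 (fun f => f x1) eqF; have := congr1 (fun f => f x2) eqF.
rewrite /F_R19 /F_Gfam Gx1 Gx2 !exprS !expr0 !mulr1 => eq2 eq1.
split; lra.
Qed.

End ContinuousCdf.

Lemma F_R19_eq_F_Gfam (R : realType) (G : R -> R) (lam : R) :
  F_R19 G lam = F_Gfam G (1 - lam) (1 + 2 * lam).
Proof. by apply: funext => x; rewrite /F_R19 /F_Gfam; ring. Qed.

Lemma continuous_F_R19 (R : realType) (lam : R) : continuous (F_R19 id lam).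
Proof.
move=> t; rewrite /F_R19.
apply: cvgB; first apply: cvgD; apply: cvgM;
  by [exact: cvg_cst | exact: exprn_continuous | exact: cvg_id].
Qed.

Lemma F_R19_nondecreasing01 (R : realType) (lam : R) : -2 <= lam <= 1 ->
  forall s t, 0 <= s -> s <= t -> t <= 1 -> F_R19 id lam s <= F_R19 id lam t.
Proof.
move=> /andP[lam_ge lam_le] s t s_ge0 le_st t_le1.
pose q := 3 * (t + s) - 2 * (t * t + t * s + s * s).
have slopeE : F_R19 id lam t - F_R19 id lam s = (t - s) * (1 - lam + lam * q).
  by rewrite /F_R19 /q /=; ring.
have q_ge0 : 0 <= q.
  have : t * t <= t by nra.
  have : s * s <= s by nra.
  have : t * s <= s by nra.
  by rewrite /q; lra.
have q_le : q <= 3 / 2.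
  have : 4 * (t * s) <= (t + s) * (t + s) by nra.
  have : 0 <= (t + s - 1) * (t + s - 1) by rewrite -expr2 sqr_ge0.
  by rewrite /q; nra.
(* The slope factor is affine in lam; the bounds on q make it nonnegative
   at both ends lam = 1 and lam = -2. *)
have slope_ge0 : 0 <= 1 - lam + lam * q.
  case: (lerP 0 lam) => [lam_ge0 | lam_lt0].
    have : 0 <= lam * q by apply: mulr_ge0.
    lra.
  have : lam * (3 / 2 - q) <= 0 by apply: mulr_le0_ge0; lra.
  lra.
by rewrite -subr_ge0 slopeE; apply: mulr_ge0; lra.
Qed.

Lemma is_cdf_comp (R : realType) (h G : R -> R) :
  is_cdf G -> continuous h ->
  (forall s t, 0 <= s -> s <= t -> t <= 1 -> h s <= h t) ->
  h 0 = 0 -> h 1 = 1 -> is_cdf (h \o G).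
Proof.
move=> [G_mono G_01 G_rc G_Ny G_y] h_cont h_mono h0 h1.
have G_ge0 x : 0 <= G x by have /andP[] := G_01 x.
have G_le1 x : G x <= 1 by have /andP[] := G_01 x.
split.
- by move=> x y le_xy; apply: h_mono; rewrite ?G_mono.
- by move=> x; apply/andP; split; [rewrite -h0 | rewrite -h1]; apply: h_mono.
- by move=> a; exact: continuous_cvg (h_cont _) (G_rc a).
- by rewrite -h0; exact: continuous_cvg (h_cont _) G_Ny.
- by rewrite -h1; exact: continuous_cvg (h_cont _) G_y.
Qed.

Theorem proposition5 (R : realType) (G : R -> R) :
  is_continuous_cdf G ->
  [/\ (forall lam : R, -1 <= lam <= 1 -> lam != 0 ->
         ~ (exists l1 l2 : R, S_G l1 l2 /\ F_R19 G lam = F_Gfam G l1 l2)),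
      (forall lam : R, - (1 / 2) <= lam <= 1 ->
         S_MG (1 - lam) (1 + 2 * lam) /\
         F_R19 G lam = F_Gfam G (1 - lam) (1 + 2 * lam))
    & (forall lam : R, -2 <= lam <= 1 -> is_cdf (F_R19 G lam))].
Proof.
move=> cdfG; have [cdf_G _] := cdfG.
split.
- move=> lam _ lam_neq0 [l1 [l2 [[/andP[l1_ge0 l1_le1] /andP[_ l2_le1]] eqF]]].
  have [l1E l2E] := F_R19_eq_F_Gfam_params cdfG eqF.
  have lam0 : lam = 0 by lra.
  by rewrite lam0 eqxx in lam_neq0.
- move=> lam /andP[lam_ge lam_le]; split; last exact: F_R19_eq_F_Gfam.
  by split; apply/andP; split; lra.
- move=> lam lam_range; change (is_cdf (F_R19 id lam \o G)).
  apply: (is_cdf_comp cdf_G (@continuous_F_R19 _ lam)).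
  + exact: F_R19_nondecreasing01 lam_range.
  + by rewrite /F_R19 /=; ring.
  + by rewrite /F_R19 /=; ring.
Qed.
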